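(* Let $-\infty\le a<b\le\infty$, let $f,g$ be differentiable on $(a,b)$ with $g'\ne0$ on $(a,b)$, and suppose $\lim_{x\to b^-}f(x)=\lim_{x\to b^-}g(x)=0$. Let $H_{f,g}=\frac{f'}{g'}g-f$ and $H_{f,g}(a^+)=\lim_{x\to a^+}H_{f,g}(x)\in[-\infty,\infty]$. (A) Suppose there is $c\in(a,b)$ such that $f'/g'$ is strictly increasing on $(a,c)$ and strictly decreasing on $(c,b)$. Then: (i) if either $g'>0$ and $H_{f,g}(a^+)\le0$, or $g'<0$ and $H_{f,g}(a^+)\ge0$, then $f/g$ is strictly decreasing on $(a,b)$; (ii) if either $g'>0$ and $H_{f,g}(a^+)>0$, or $g'<0$ and $H_{f,g}(a^+)<0$, then there is a unique $x_b\in(a,b)$ such that $f/g$ is strictly increasing on $(a,x_b)$ and strictly decreasing on $(x_b,b)$. (B) Suppose there is $c\in(a,b)$ such that $f'/g'$ is strictly decreasing on $(a,c)$ and strictly increasing on $(c,b)$. Then: (i) if either $g'>0$ and $H_{f,g}(a^+)\ge0$, or $g'<0$ and $H_{f,g}(a^+)\le0$, then $f/g$ is strictly increasing on $(a,b)$; (ii) if either $g'>0$ and $H_{f,g}(a^+)<0$, or $g'<0$ and $H_{f,g}(a^+)>0$, then there is a unique $x_b\in(a,b)$ such that $f/g$ is strictly decreasing on $(a,x_b)$ and strictly increasing on $(x_b,b)$.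
   Context: $H_{f,g}(x)=\frac{f'(x)}{g'(x)}g(x)-f(x)$ for $x\in(a,b)$, defined for differentiable $f,g$ with $g'\ne0$ on $(a,b)$. *)

From Stdlib Require Import Reals Lra.
Open Scope R_scope.

Inductive ER : Type := Fin (r : R) | PInf | MInf.

Definition ER_lt (x y : ER) : Prop :=
  match x, y with
  | Fin u, Fin v => u < v
  | MInf, Fin _ | MInf, PInf | Fin _, PInf => True
  | _, _ => False
  end.

Definition ER_le (x y : ER) : Prop := x = y \/ ER_lt x y.

Definition in_ivl (a b : ER) (x : R) : Prop := ER_lt a (Fin x) /\ ER_lt (Fin x) b.

Definition near_left (b : ER) (P : R -> Prop) : Prop :=
  match b with
  | Fin b0 => exists d, 0 < d /\ forall x, b0 - d < x < b0 -> P x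
  | PInf => exists M, forall x, M < x -> P x
  | MInf => True
  end.

Definition near_right (a : ER) (P : R -> Prop) : Prop :=
  match a with
  | Fin a0 => exists d, 0 < d /\ forall x, a0 < x < a0 + d -> P x
  | MInf => exists M, forall x, x < M -> P x
  | PInf => True
  end.

Definition lim_left (f : R -> R) (b : ER) (l : R) : Prop :=
  forall eps, 0 < eps -> near_left b (fun x => Rabs (f x - l) < eps).

Definition lim_right_ext (h : R -> R) (a : ER) (L : ER) : Prop :=
  match L with
  | Fin l => forall eps, 0 < eps -> near_right a (fun x => Rabs (h x - l) < eps)
  | PInf => forall M, near_right a (fun x => M < h x)
  | MInf => forall M, near_right a (fun x => h x < M)
  end.

Definition Hfg (f g f' g' : R -> R) (x : R) : R := f' x / g' x * g x - f x.

Definition strict_incr_on (lo hi : ER) (F : R -> R) : Prop :=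
  forall x y, in_ivl lo hi x -> in_ivl lo hi y -> x < y -> F x < F y.
Definition strict_decr_on (lo hi : ER) (F : R -> R) : Prop :=
  forall x y, in_ivl lo hi x -> in_ivl lo hi y -> x < y -> F y < F x.

From Stdlib Require Import Reals Lra Classical FunctionalExtensionality.
Open Scope R_scope.

(* With H = (f'/g') g - f one has (f/g)' = g' H / g^2 and, by the Cauchy mean value
   theorem, f(y) - f(x) = (f'/g')(xi) (g(y) - g(x)).  Normalise to g' > 0; then g
   increases to 0, so g < 0 and f/g moves like the sign of H.  On (c, b), where f'/g'
   decreases, H(x) < (f'/g')(x) g(y) - f(y) for x < y; letting y -> b gives H <= 0, and
   one more comparison makes it strict.  On (a, c), where f'/g' increases, H is strictly
   decreasing, so H < H(a+) there and, when H(a+) > 0, H changes sign exactly once, at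
   the supremum of {H > 0}.  The other cases follow by replacing (f, g) with (-f, -g),
   or f with -f. *)

Definition peak_at (lo hi : ER) (F : R -> R) (x : R) : Prop :=
  in_ivl lo hi x /\ strict_incr_on lo (Fin x) F /\ strict_decr_on (Fin x) hi F.
Definition trough_at (lo hi : ER) (F : R -> R) (x : R) : Prop :=
  in_ivl lo hi x /\ strict_decr_on lo (Fin x) F /\ strict_incr_on (Fin x) hi F.

Lemma ER_lt_le_trans a p q : ER_lt a (Fin p) -> p <= q -> ER_lt a (Fin q).
Proof. destruct a; simpl; intros; auto; lra. Qed.

Lemma ER_le_lt_trans b p q : q <= p -> ER_lt (Fin p) b -> ER_lt (Fin q) b.
Proof. destruct b; simpl; intros; auto; lra. Qed.

Lemma in_ivl_between lo hi p q t :
  in_ivl lo hi p -> in_ivl lo hi q -> p <= t <= q -> in_ivl lo hi t.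
Proof.
  intros [Hp _] [_ Hq] Ht.
  split; [apply (ER_lt_le_trans _ p) | apply (ER_le_lt_trans _ q)]; tauto.
Qed.

Lemma in_ivl_sub_left lo hi m :
  ER_lt (Fin m) hi -> forall x, in_ivl lo (Fin m) x -> in_ivl lo hi x.
Proof.
  intros Hm x [Hx Hxm]; split; [exact Hx | apply (ER_le_lt_trans _ m)]; simpl in *; auto; lra.
Qed.

Lemma in_ivl_sub_right lo hi m :
  ER_lt lo (Fin m) -> forall x, in_ivl (Fin m) hi x -> in_ivl lo hi x.
Proof.
  intros Hm x [Hmx Hx]; split; [apply (ER_lt_le_trans _ m) | exact Hx]; simpl in *; auto; lra.
Qed.

Lemma ER_lt_dense_left a x : ER_lt a (Fin x) -> exists z, ER_lt a (Fin z) /\ z < x.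
Proof.
  destruct a as [a0| |]; simpl; intros Hx; try contradiction.
  - exists ((a0 + x) / 2); simpl; split; lra.
  - exists (x - 1); simpl; split; auto; lra.
Qed.

Lemma ER_lt_dense_right b x : ER_lt (Fin x) b -> exists z, x < z /\ ER_lt (Fin z) b.
Proof.
  destruct b as [b0| |]; simpl; intros Hx; try contradiction.
  - exists ((x + b0) / 2); simpl; split; lra.
  - exists (x + 1); simpl; split; auto; lra.
Qed.

Lemma ER_le_Fin_trans p L q : ER_le (Fin p) L -> ER_le L (Fin q) -> p <= q.
Proof.
  unfold ER_le; destruct L as [l| |]; simpl;
    intros [E1|E1] [E2|E2]; try discriminate; try contradiction;
    try (injection E1; intro); try (injection E2; intro); lra.
Qed.

Definition ER_neg (L : ER) : ER :=
  match L with Fin l => Fin (- l) | PInf => MInf | MInf => PInf end.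

Lemma ER_lt_neg x y : ER_lt x y -> ER_lt (ER_neg y) (ER_neg x).
Proof. destruct x, y; simpl; auto; lra. Qed.

Lemma ER_le_neg x y : ER_le x y -> ER_le (ER_neg y) (ER_neg x).
Proof. intros [-> | Hxy]; [left; reflexivity | right; apply ER_lt_neg, Hxy]. Qed.

Lemma ER_neg_0 : ER_neg (Fin 0) = Fin 0.
Proof. simpl; rewrite Ropp_0; reflexivity. Qed.

Lemma near_left_pick b P m :
  near_left b P -> ER_lt (Fin m) b -> exists y, m < y /\ ER_lt (Fin y) b /\ P y.
Proof.
  destruct b as [b0| |]; simpl.
  - intros [d [Hd HP]] Hm. exists (Rmax m (b0 - d) + (b0 - Rmax m (b0 - d)) / 2).
    pose proof (Rmax_l m (b0 - d)); pose proof (Rmax_r m (b0 - d)).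
    assert (Rmax m (b0 - d) < b0) by (apply Rmax_lub_lt; lra).
    repeat split; try lra. apply HP; lra.
  - intros [M HP] _. exists (Rmax m M + 1).
    pose proof (Rmax_l m M); pose proof (Rmax_r m M).
    repeat split; auto; try lra. apply HP; lra.
  - intros _ [].
Qed.

Lemma near_right_pick a P z :
  near_right a P -> ER_lt a (Fin z) -> exists w, ER_lt a (Fin w) /\ w < z /\ P w.
Proof.
  destruct a as [a0| |]; simpl.
  - intros [d [Hd HP]] Hz. exists (a0 + (Rmin z (a0 + d) - a0) / 2).
    pose proof (Rmin_l z (a0 + d)); pose proof (Rmin_r z (a0 + d)).
    assert (a0 < Rmin z (a0 + d)) by (apply Rmin_glb_lt; lra).
    repeat split; try lra. apply HP; lra.
  - intros _ [].
  - intros [M HP] _. exists (Rmin z M - 1).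
    pose proof (Rmin_l z M); pose proof (Rmin_r z M).
    repeat split; auto; try lra. apply HP; lra.
Qed.

Lemma near_left_and b P Q :
  near_left b P -> near_left b Q -> near_left b (fun x => P x /\ Q x).
Proof.
  destruct b as [b0| |]; simpl; auto.
  - intros [d1 [H1 P1]] [d2 [H2 P2]]. exists (Rmin d1 d2). split.
    + apply Rmin_glb_lt; auto.
    + intros x Hx. pose proof (Rmin_l d1 d2); pose proof (Rmin_r d1 d2).
      split; [apply P1 | apply P2]; lra.
  - intros [M1 P1] [M2 P2]. exists (Rmax M1 M2). intros x Hx.
    pose proof (Rmax_l M1 M2); pose proof (Rmax_r M1 M2).
    split; [apply P1 | apply P2]; lra.
Qed.

Lemma near_left_impl b (P Q : R -> Prop) :
  (forall x, P x -> Q x) -> near_left b P -> near_left b Q.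
Proof. destruct b; simpl; auto; firstorder. Qed.

Lemma near_right_impl a (P Q : R -> Prop) :
  (forall x, P x -> Q x) -> near_right a P -> near_right a Q.
Proof. destruct a; simpl; auto; firstorder. Qed.

Lemma lim_left_lincomb u v b k :
  lim_left u b 0 -> lim_left v b 0 -> lim_left (fun y => k * u y - v y) b 0.
Proof.
  intros Hu Hv eps Heps.
  pose proof (Rabs_pos k) as Hk.
  set (e := eps / (2 * (Rabs k + 1))).
  assert (He : 0 < e) by (apply Rdiv_lt_0_compat; lra).
  assert (Hek : Rabs k * e <= eps / 2).
  { unfold e. apply (Rmult_le_reg_r (2 * (Rabs k + 1))); [lra|].
    field_simplify; [|lra]. nra. }
  apply (near_left_impl b (fun y => Rabs (u y - 0) < e /\ Rabs (v y - 0) < eps / 2)).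
  - intros y [Hy1 Hy2]. rewrite Rminus_0_r in *.
    pose proof (Rabs_triang (k * u y) (- v y)) as T.
    rewrite Rabs_mult, Rabs_Ropp in T.
    assert (Rabs k * Rabs (u y) <= Rabs k * e) by (apply Rmult_le_compat_l; lra).
    unfold Rminus. lra.
  - apply near_left_and; [apply Hu, He | apply Hv; lra].
Qed.

Lemma lim_left_ge phi b l x K :
  lim_left phi b l -> ER_lt (Fin x) b ->
  (forall y, x < y -> ER_lt (Fin y) b -> K <= phi y) -> K <= l.
Proof.
  intros Hl Hx Hb. destruct (Rle_or_lt K l) as [|Hlt]; auto.
  destruct (near_left_pick b _ x (Hl (K - l) ltac:(lra)) Hx) as [y [Hxy [Hy Hphi]]].
  specialize (Hb y Hxy Hy). apply Rabs_def2 in Hphi. lra.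
Qed.

Lemma lim_right_ext_ge h a L z K :
  lim_right_ext h a L -> ER_lt a (Fin z) ->
  (forall w, ER_lt a (Fin w) -> w < z -> K <= h w) -> ER_le (Fin K) L.
Proof.
  intros HL Hz Hb. destruct L as [l| |]; simpl in HL.
  - destruct (Rle_or_lt K l) as [[Hlt | ->] | Hlt];
      [right; exact Hlt | left; reflexivity |].
    destruct (near_right_pick a _ z (HL (K - l) ltac:(lra)) Hz) as [w [Hw [Hwz Hh]]].
    specialize (Hb w Hw Hwz). apply Rabs_def2 in Hh. lra.
  - right; exact I.
  - destruct (near_right_pick a _ z (HL K) Hz) as [w [Hw [Hwz Hh]]].
    specialize (Hb w Hw Hwz). lra.
Qed.

Lemma lim_right_ext_gt h a L K :
  lim_right_ext h a L -> ER_lt (Fin K) L -> near_right a (fun x => K < h x).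
Proof.
  intros HL HK. destruct L as [l| |]; simpl in HL, HK; try contradiction.
  - eapply near_right_impl; [|exact (HL (l - K) ltac:(lra))].
    intros x Hx. apply Rabs_def2 in Hx. lra.
  - apply HL.
Qed.

Lemma lim_left_opp f b : lim_left f b 0 -> lim_left (fun x => - f x) b 0.
Proof.
  intros Hf eps Heps. eapply near_left_impl; [|exact (Hf eps Heps)].
  intros x Hx; simpl in *. rewrite Rminus_0_r, Rabs_Ropp in *. exact Hx.
Qed.

Lemma lim_right_ext_opp h a L :
  lim_right_ext h a L -> lim_right_ext (fun x => - h x) a (ER_neg L).
Proof.
  destruct L as [l| |]; simpl; intros HL.
  - intros eps Heps. eapply near_right_impl; [|exact (HL eps Heps)]. intros x Hx.
    replace (- h x - - l) with (- (h x - l)) by ring. rewrite Rabs_Ropp. exact Hx.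
  - intros M. eapply near_right_impl; [|exact (HL (- M))]. intros x Hx; lra.
  - intros M. eapply near_right_impl; [|exact (HL (- M))]. intros x Hx; lra.
Qed.

Lemma cauchy_mvt (f g f' g' : R -> R) x y :
  x < y ->
  (forall t, x <= t <= y -> derivable_pt_lim f t (f' t)) ->
  (forall t, x <= t <= y -> derivable_pt_lim g t (g' t)) ->
  exists xi, x < xi < y /\ (g y - g x) * f' xi = (f y - f x) * g' xi.
Proof.
  intros Hxy Hf Hg.
  set (phi := fun t => (g y - g x) * f t - (f y - f x) * g t).
  destruct (MVT_cor2 phi (fun t => (g y - g x) * f' t - (f y - f x) * g' t) x y Hxy)
    as [xi [E Hxi]].
  - intros t Ht. apply (derivable_pt_lim_minus (fun t => _ * f t) (fun t => _ * g t));
      apply derivable_pt_lim_scal; auto.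
  - exists xi; split; [exact Hxi|]. unfold phi in E.
    assert (((g y - g x) * f' xi - (f y - f x) * g' xi) * (y - x) = 0) by lra.
    apply Rmult_integral in H as [|]; lra.
Qed.

Lemma strict_decr_from_deriv lo hi (F D : R -> R) e :
  (forall x, in_ivl lo hi x -> derivable_pt_lim F x (D x)) ->
  (forall x, in_ivl lo hi x -> x <> e -> D x < 0) ->
  strict_decr_on lo hi F.
Proof.
  intros HF HD.
  assert (Hnoe : forall x y, in_ivl lo hi x -> in_ivl lo hi y -> x < y ->
                   ~ (x < e < y) -> F y < F x).
  { intros x y Hx Hy Hxy He.
    destruct (MVT_cor2 F D x y Hxy) as [xi [E Hxi]].
    - intros t Ht. apply HF, (in_ivl_between lo hi x y); auto.
    - assert (D xi < 0).
      { apply HD; [apply (in_ivl_between lo hi x y); auto; lra |].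
        intros ->; apply He; lra. }
      nra. }
  intros x y Hx Hy Hxy.
  destruct (Rlt_dec x e), (Rlt_dec e y); try (apply Hnoe; auto; lra).
  assert (He : in_ivl lo hi e) by (apply (in_ivl_between lo hi x y); auto; lra).
  assert (F e < F x) by (apply Hnoe; auto; lra).
  assert (F y < F e) by (apply Hnoe; auto; lra).
  lra.
Qed.

Lemma strict_incr_from_deriv lo hi (F D : R -> R) e :
  (forall x, in_ivl lo hi x -> derivable_pt_lim F x (D x)) ->
  (forall x, in_ivl lo hi x -> x <> e -> 0 < D x) ->
  strict_incr_on lo hi F.
Proof.
  intros HF HD x y Hx Hy Hxy.
  enough (- F y < - F x) by lra.
  apply (strict_decr_from_deriv lo hi (fun x => - F x) (fun x => - D x) e); auto.
  - intros t Ht. apply derivable_pt_lim_opp, HF, Ht.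
  - intros t Ht Hte. specialize (HD t Ht Hte). lra.
Qed.

Lemma strict_decr_sign_threshold lo (c : R) F :
  strict_decr_on lo (Fin c) F -> (exists z, in_ivl lo (Fin c) z /\ 0 < F z) ->
  exists x0, ER_lt lo (Fin x0) /\ x0 <= c /\
    (forall x, in_ivl lo (Fin x0) x -> 0 < F x) /\
    (forall x, x0 < x < c -> F x < 0).
Proof.
  intros HF Hz.
  set (E := fun x => in_ivl lo (Fin c) x /\ 0 < F x).
  assert (HEb : bound E) by (exists c; intros y [[_ Hy] _]; simpl in Hy; lra).
  destruct (completeness E HEb Hz) as [x0 [Hub Hlub]].
  destruct Hz as [z Ez].
  assert (Hzx0 : z <= x0) by (apply Hub, Ez).
  assert (Hlo : ER_lt lo (Fin x0)) by (apply (ER_lt_le_trans _ z); [apply Ez | exact Hzx0]).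
  assert (Hx0c : x0 <= c) by (apply Hlub; intros y [[_ Hy] _]; simpl in Hy; lra).
  exists x0; repeat split; auto.
  - intros x [Hx Hxx0]; simpl in Hxx0.
    assert (Hs : exists s, E s /\ x < s).
    { apply NNPP; intros Hno.
      enough (x0 <= x) by lra.
      apply Hlub; intros s Es. apply Rnot_lt_le; intros Hxs. apply Hno; eauto. }
    destruct Hs as [s [[[_ Hsc] Hs] Hxs]]; simpl in Hsc.
    assert (F s < F x); [|lra].
    apply HF; [split | split |]; simpl; auto; try lra.
    apply (ER_lt_le_trans _ x); auto; lra.
  - intros x [Hx0x Hxc]. apply Rnot_le_lt; intros Hx.
    set (y := (x0 + x) / 2).
    assert (Hiy : in_ivl lo (Fin c) y)
      by (split; simpl; [apply (ER_lt_le_trans _ x0); auto|]; unfold y; lra).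
    assert (F x < F y).
    { apply HF; auto; [split | unfold y]; simpl; try lra. apply (ER_lt_le_trans _ x0); auto; lra. }
    assert (y <= x0) by (apply Hub; split; auto; lra).
    unfold y in *; lra.
Qed.

Lemma peak_at_not_lt lo hi F x0 x1 :
  peak_at lo hi F x0 -> peak_at lo hi F x1 -> ~ x0 < x1.
Proof.
  intros [Hx0 [_ Hdec0]] [Hx1 [Hinc1 _]] Hlt.
  set (p := x0 + (x1 - x0) / 3). set (q := x0 + 2 * (x1 - x0) / 3).
  assert (Hp : in_ivl lo hi p) by (apply (in_ivl_between lo hi x0 x1); auto; unfold p; lra).
  assert (Hq : in_ivl lo hi q) by (apply (in_ivl_between lo hi x0 x1); auto; unfold q; lra).
  assert (F p < F q)
    by (apply Hinc1; [split | split |]; simpl; try apply Hp; try apply Hq; unfold p, q; lra).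
  assert (F q < F p)
    by (apply Hdec0; [split | split |]; simpl; try apply Hp; try apply Hq; unfold p, q; lra).
  lra.
Qed.

Lemma peak_at_unique lo hi F x0 x1 :
  peak_at lo hi F x0 -> peak_at lo hi F x1 -> x0 = x1.
Proof.
  intros H0 H1. destruct (Rtotal_order x0 x1) as [Hlt | [Heq | Hgt]]; auto.
  - destruct (peak_at_not_lt lo hi F x0 x1 H0 H1 Hlt).
  - destruct (peak_at_not_lt lo hi F x1 x0 H1 H0 Hgt).
Qed.

Section IncreasingDenominator.

Variables (a b : ER) (f g f' g' : R -> R) (c : R).
Hypotheses
  (f_deriv : forall x, in_ivl a b x -> derivable_pt_lim f x (f' x))
  (g_deriv : forall x, in_ivl a b x -> derivable_pt_lim g x (g' x))
  (g'_pos : forall x, in_ivl a b x -> 0 < g' x)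
  (f_lim : lim_left f b 0) (g_lim : lim_left g b 0)
  (c_peak : peak_at a b (fun x => f' x / g' x) c).

Let r x := f' x / g' x.
Let H := Hfg f g f' g'.

Let H_eq x : H x = r x * g x - f x := eq_refl.

Let c_in : in_ivl a b c := proj1 c_peak.

Let r_incr : strict_incr_on a (Fin c) r := proj1 (proj2 c_peak).

Let r_decr : strict_decr_on (Fin c) b r := proj2 (proj2 c_peak).

Let in_ivl_left_of_c : forall x, in_ivl a (Fin c) x -> in_ivl a b x :=
  in_ivl_sub_left a b c (proj2 c_in).

Lemma g_incr : strict_incr_on a b g.
Proof. exact (strict_incr_from_deriv a b g g' c g_deriv (fun x Hx _ => g'_pos x Hx)). Qed.

Lemma g_neg x : in_ivl a b x -> g x < 0.
Proof.
  intros Hx. destruct (ER_lt_dense_right b x (proj2 Hx)) as [m [Hxm Hm]].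
  assert (Hmi : in_ivl a b m) by (split; [apply (ER_lt_le_trans _ x) |]; try apply Hx; auto; lra).
  assert (g m <= 0).
  { apply (lim_left_ge g b 0 m); auto. intros y Hmy Hy. left; apply g_incr; auto.
    split; [apply (ER_lt_le_trans _ m) |]; try apply Hmi; auto; lra. }
  assert (g x < g m) by (apply g_incr; auto).
  lra.
Qed.

Lemma ratio_cauchy x y : in_ivl a b x -> in_ivl a b y -> x < y ->
  exists xi, x < xi < y /\ f y - f x = r xi * (g y - g x).
Proof.
  intros Hx Hy Hxy.
  assert (Hsub : forall t, x <= t <= y -> in_ivl a b t)
    by (intros; apply (in_ivl_between a b x y); auto).
  destruct (cauchy_mvt f g f' g' x y Hxy) as [xi [Hxi E]];
    [intros t Ht; apply f_deriv, Hsub, Ht | intros t Ht; apply g_deriv, Hsub, Ht |].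
  exists xi; split; auto.
  assert (Hg' : 0 < g' xi) by (apply g'_pos, Hsub; lra).
  unfold r. apply (Rmult_eq_reg_r (g' xi)); [|lra].
  field_simplify; lra.
Qed.

Lemma Hfg_lt_secant x y : in_ivl a b x -> in_ivl a b y -> c < x < y ->
  H x < r x * g y - f y.
Proof.
  intros Hx Hy [Hcx Hxy].
  destruct (ratio_cauchy x y Hx Hy Hxy) as [xi [Hxi E]].
  assert (r xi < r x) by (apply r_decr; [split | split |]; simpl; try apply Hx; try apply Hy;
    try (apply (in_ivl_between a b x y); auto); lra).
  assert (g x < g y) by (apply g_incr; auto).
  rewrite H_eq. nra.
Qed.

Lemma Hfg_nonpos_right x : in_ivl a b x -> c < x -> H x <= 0.
Proof.
  intros Hx Hcx.
  apply (lim_left_ge (fun y => r x * g y - f y) b 0 x); [apply lim_left_lincomb; auto | apply Hx |].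
  intros y Hxy Hy. left. apply Hfg_lt_secant; auto.
  split; [apply (ER_lt_le_trans _ x) |]; try apply Hx; auto; lra.
Qed.

Lemma Hfg_neg_right x : in_ivl a b x -> c < x -> H x < 0.
Proof.
  intros Hx Hcx. destruct (ER_lt_dense_right b x (proj2 Hx)) as [m [Hxm Hm]].
  assert (Hmi : in_ivl a b m) by (split; [apply (ER_lt_le_trans _ x) |]; try apply Hx; auto; lra).
  assert (H x < r x * g m - f m) by (apply Hfg_lt_secant; auto).
  assert (r m < r x) by (apply r_decr; [split | split |]; simpl; try apply Hx; try apply Hmi; lra).
  pose proof (g_neg m Hmi). pose proof (Hfg_nonpos_right m Hmi ltac:(lra)).
  rewrite H_eq in *. nra.
Qed.

Lemma Hfg_decr_left : strict_decr_on a (Fin c) H.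
Proof.
  intros x y Hx Hy Hxy.
  destruct (ratio_cauchy x y (in_ivl_left_of_c x Hx) (in_ivl_left_of_c y Hy) Hxy) as [xi [Hxi E]].
  assert (Hxii : in_ivl a (Fin c) xi) by (apply (in_ivl_between _ _ x y); auto; lra).
  assert (r x < r xi) by (apply r_incr; auto; lra).
  assert (r xi < r y) by (apply r_incr; auto; lra).
  pose proof (g_neg x (in_ivl_left_of_c x Hx)). pose proof (g_neg y (in_ivl_left_of_c y Hy)).
  (* H y - H x = (r y - r xi) g y + (r xi - r x) g x, both terms negative. *)
  rewrite !H_eq. nra.
Qed.

Lemma ratio_deriv x : in_ivl a b x ->
  derivable_pt_lim (fun y => f y / g y) x (g' x * H x / (g x)²).
Proof.
  intros Hx. pose proof (g_neg x Hx) as Hg. pose proof (g'_pos x Hx) as Hg'.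
  replace (g' x * H x / (g x)²) with ((f' x * g x - g' x * f x) / (g x)²).
  - apply derivable_pt_lim_div; [apply f_deriv | apply g_deriv | apply Rlt_not_eq]; assumption.
  - rewrite H_eq; unfold r. field.
    split; apply Rgt_not_eq; [exact Hg' | apply Rlt_0_sqr, Rlt_not_eq; exact Hg].
Qed.

Lemma ratio_decr_where lo hi e :
  (forall x, in_ivl lo hi x -> in_ivl a b x) ->
  (forall x, in_ivl lo hi x -> x <> e -> H x < 0) ->
  strict_decr_on lo hi (fun x => f x / g x).
Proof.
  intros Hsub Hneg.
  apply (strict_decr_from_deriv lo hi _ (fun x => g' x * H x / (g x)²) e);
    [intros; apply ratio_deriv; auto |].
  intros x Hx Hxe. specialize (Hneg x Hx Hxe).
  pose proof (g_neg x (Hsub x Hx)). pose proof (g'_pos x (Hsub x Hx)).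
  apply Rdiv_neg_pos; [nra | apply Rlt_0_sqr; lra].
Qed.

Lemma ratio_incr_where lo hi e :
  (forall x, in_ivl lo hi x -> in_ivl a b x) ->
  (forall x, in_ivl lo hi x -> x <> e -> 0 < H x) ->
  strict_incr_on lo hi (fun x => f x / g x).
Proof.
  intros Hsub Hpos.
  apply (strict_incr_from_deriv lo hi _ (fun x => g' x * H x / (g x)²) e);
    [intros; apply ratio_deriv; auto |].
  intros x Hx Hxe. specialize (Hpos x Hx Hxe).
  pose proof (g_neg x (Hsub x Hx)). pose proof (g'_pos x (Hsub x Hx)).
  apply Rdiv_lt_0_compat; [nra | apply Rlt_0_sqr; lra].
Qed.

Variable L : ER.
Hypothesis H_lim : lim_right_ext H a L.

Lemma Hfg_neg_left : ER_le L (Fin 0) -> forall x, in_ivl a (Fin c) x -> H x < 0.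
Proof.
  intros HL x Hx. apply Rnot_le_lt; intros HHx.
  destruct (ER_lt_dense_left a x (proj1 Hx)) as [z [Hz Hzx]].
  assert (Hzi : in_ivl a (Fin c) z)
    by (apply (in_ivl_sub_left _ _ x); simpl; [apply Hx | split]; auto).
  assert (H x < H z) by (apply Hfg_decr_left; auto).
  enough (H z <= 0) by lra.
  apply (ER_le_Fin_trans _ L); auto.
  apply (lim_right_ext_ge H a L z); auto. intros w Hw Hwz. left.
  apply Hfg_decr_left; auto. apply (in_ivl_sub_left _ _ z); simpl; [apply Hzi | split]; auto.
Qed.

Lemma ratio_decr_of_nonpos_limit : ER_le L (Fin 0) -> strict_decr_on a b (fun x => f x / g x).
Proof.
  intros HL. apply (ratio_decr_where a b c); auto.
  intros x Hx Hxc. destruct (Rtotal_order x c) as [Hlt | [Heq | Hgt]]; [| contradiction |].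
  - apply Hfg_neg_left; auto. split; [apply Hx | exact Hlt].
  - apply Hfg_neg_right; auto.
Qed.

Lemma Hfg_sign_change : ER_lt (Fin 0) L ->
  exists x0, in_ivl a b x0 /\
    (forall x, in_ivl a (Fin x0) x -> 0 < H x) /\ (forall x, x0 < x < c -> H x < 0).
Proof.
  intros HL.
  destruct (strict_decr_sign_threshold a c H Hfg_decr_left) as [x0 [Hx0 [Hx0c [Hpos Hneg]]]].
  - destruct (near_right_pick a _ c (lim_right_ext_gt H a L 0 H_lim HL) (proj1 c_in))
      as [z [Hz [Hzc HHz]]].
    exists z; split; [split |]; auto.
  - exists x0; repeat split; auto.
    apply (ER_le_lt_trans _ c); [exact Hx0c | apply c_in].
Qed.

Lemma ratio_peak_of_pos_limit : ER_lt (Fin 0) L ->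
  exists! xb, peak_at a b (fun x => f x / g x) xb.
Proof.
  intros HL. destruct (Hfg_sign_change HL) as [x0 [Hx0 [Hpos Hneg]]].
  assert (Hpeak : peak_at a b (fun x => f x / g x) x0).
  { split; [exact Hx0 | split].
    - apply (ratio_incr_where _ _ c); [exact (in_ivl_sub_left _ _ _ (proj2 Hx0)) |]; auto.
    - apply (ratio_decr_where _ _ c); [exact (in_ivl_sub_right _ _ _ (proj1 Hx0)) |].
      intros x [Hx0x Hx] Hxc; simpl in Hx0x.
      assert (Hxi : in_ivl a b x) by (apply (in_ivl_sub_right _ _ x0); [apply Hx0 | split]; auto).
      destruct (Rtotal_order x c) as [Hlt | [Heq | Hgt]]; [| contradiction |].
      + apply Hneg; lra.
      + apply Hfg_neg_right; auto. }
  exists x0; split; [exact Hpeak |].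
  intros x1 Hx1. exact (peak_at_unique _ _ _ _ _ Hpeak Hx1).
Qed.

End IncreasingDenominator.

Lemma strict_incr_on_opp lo hi F :
  strict_incr_on lo hi (fun x => - F x) <-> strict_decr_on lo hi F.
Proof. split; intros HF x y Hx Hy Hxy; specialize (HF x y Hx Hy Hxy); simpl in *; lra. Qed.

Lemma strict_decr_on_opp lo hi F :
  strict_decr_on lo hi (fun x => - F x) <-> strict_incr_on lo hi F.
Proof. split; intros HF x y Hx Hy Hxy; specialize (HF x y Hx Hy Hxy); simpl in *; lra. Qed.

Lemma peak_at_opp lo hi F x : peak_at lo hi (fun y => - F y) x <-> trough_at lo hi F x.
Proof.
  unfold peak_at, trough_at. rewrite strict_incr_on_opp, strict_decr_on_opp. tauto.
Qed.

Lemma ex_unique_iff (P Q : R -> Prop) :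
  (forall x, P x <-> Q x) -> (exists! x, P x) -> exists! x, Q x.
Proof.
  intros PQ [x [Px Hu]]. exists x; split; [apply PQ, Px |].
  intros y Qy. apply Hu, PQ, Qy.
Qed.

Lemma Ropp_div_Ropp_fun (u v : R -> R) : (fun x => - u x / - v x) = (fun x => u x / v x).
Proof. apply functional_extensionality; intros x. unfold Rdiv. rewrite Rinv_opp. ring. Qed.

Lemma Ropp_div_fun (u v : R -> R) : (fun x => - u x / v x) = (fun x => - (u x / v x)).
Proof. apply functional_extensionality; intros x. unfold Rdiv. ring. Qed.

Lemma Hfg_opp_opp f g f' g' :
  Hfg (fun x => - f x) (fun x => - g x) (fun x => - f' x) (fun x => - g' x)
  = (fun x => - Hfg f g f' g' x).
Proof. apply functional_extensionality; intros x. unfold Hfg, Rdiv. rewrite Rinv_opp. ring. Qed.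

Lemma Hfg_opp_l f g f' g' :
  Hfg (fun x => - f x) g (fun x => - f' x) g' = (fun x => - Hfg f g f' g' x).
Proof. apply functional_extensionality; intros x. unfold Hfg, Rdiv. ring. Qed.

Lemma deriv_opp_on a b (f f' : R -> R) :
  (forall x, in_ivl a b x -> derivable_pt_lim f x (f' x)) ->
  forall x, in_ivl a b x -> derivable_pt_lim (fun y => - f y) x (- f' x).
Proof. intros Hf x Hx. apply derivable_pt_lim_opp, Hf, Hx. Qed.

Lemma peaked_ratio_decreasing_denominator a b f g f' g' c L :
  (forall x, in_ivl a b x -> derivable_pt_lim f x (f' x)) ->
  (forall x, in_ivl a b x -> derivable_pt_lim g x (g' x)) ->
  (forall x, in_ivl a b x -> g' x < 0) ->
  lim_left f b 0 -> lim_left g b 0 ->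
  peak_at a b (fun x => f' x / g' x) c ->
  lim_right_ext (Hfg f g f' g') a L ->
  (ER_le (Fin 0) L -> strict_decr_on a b (fun x => f x / g x)) /\
  (ER_lt L (Fin 0) -> exists! xb, peak_at a b (fun x => f x / g x) xb).
Proof.
  intros Hf Hg Hneg Hfl Hgl Hc HL.
  assert (Hpos : forall x, in_ivl a b x -> 0 < - g' x)
    by (intros x Hx; specialize (Hneg x Hx); lra).
  rewrite <- (Ropp_div_Ropp_fun f' g') in Hc.
  apply lim_right_ext_opp in HL. rewrite <- Hfg_opp_opp in HL.
  rewrite <- (Ropp_div_Ropp_fun f g). split; intros HL0.
  - apply (ratio_decr_of_nonpos_limit a b _ _ _ _ c (deriv_opp_on _ _ _ _ Hf)
      (deriv_opp_on _ _ _ _ Hg) Hpos (lim_left_opp _ _ Hfl) (lim_left_opp _ _ Hgl) Hc _ HL).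
    rewrite <- ER_neg_0. apply ER_le_neg, HL0.
  - apply (ratio_peak_of_pos_limit a b _ _ _ _ c (deriv_opp_on _ _ _ _ Hf)
      (deriv_opp_on _ _ _ _ Hg) Hpos (lim_left_opp _ _ Hfl) (lim_left_opp _ _ Hgl) Hc _ HL).
    rewrite <- ER_neg_0. apply ER_lt_neg, HL0.
Qed.

Lemma peaked_ratio a b f g f' g' L :
  (forall x, in_ivl a b x -> derivable_pt_lim f x (f' x)) ->
  (forall x, in_ivl a b x -> derivable_pt_lim g x (g' x)) ->
  lim_left f b 0 -> lim_left g b 0 ->
  lim_right_ext (Hfg f g f' g') a L ->
  (exists c, peak_at a b (fun x => f' x / g' x) c) ->
  (((forall x, in_ivl a b x -> 0 < g' x) /\ ER_le L (Fin 0) \/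
    (forall x, in_ivl a b x -> g' x < 0) /\ ER_le (Fin 0) L) ->
    strict_decr_on a b (fun x => f x / g x)) /\
  (((forall x, in_ivl a b x -> 0 < g' x) /\ ER_lt (Fin 0) L \/
    (forall x, in_ivl a b x -> g' x < 0) /\ ER_lt L (Fin 0)) ->
    exists! xb, peak_at a b (fun x => f x / g x) xb).
Proof.
  intros Hf Hg Hfl Hgl HL [c Hc]. split; intros [[Hsign HL0] | [Hsign HL0]].
  - exact (ratio_decr_of_nonpos_limit a b f g f' g' c Hf Hg Hsign Hfl Hgl Hc L HL HL0).
  - apply (peaked_ratio_decreasing_denominator a b f g f' g' c L); assumption.
  - exact (ratio_peak_of_pos_limit a b f g f' g' c Hf Hg Hsign Hfl Hgl Hc L HL HL0).
  - apply (peaked_ratio_decreasing_denominator a b f g f' g' c L); assumption.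
Qed.

Lemma troughed_ratio a b f g f' g' L :
  (forall x, in_ivl a b x -> derivable_pt_lim f x (f' x)) ->
  (forall x, in_ivl a b x -> derivable_pt_lim g x (g' x)) ->
  lim_left f b 0 -> lim_left g b 0 ->
  lim_right_ext (Hfg f g f' g') a L ->
  (exists c, trough_at a b (fun x => f' x / g' x) c) ->
  (((forall x, in_ivl a b x -> 0 < g' x) /\ ER_le (Fin 0) L \/
    (forall x, in_ivl a b x -> g' x < 0) /\ ER_le L (Fin 0)) ->
    strict_incr_on a b (fun x => f x / g x)) /\
  (((forall x, in_ivl a b x -> 0 < g' x) /\ ER_lt L (Fin 0) \/
    (forall x, in_ivl a b x -> g' x < 0) /\ ER_lt (Fin 0) L) ->
    exists! xb, trough_at a b (fun x => f x / g x) xb).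
Proof.
  intros Hf Hg Hfl Hgl HL [c Hc].
  apply lim_right_ext_opp in HL. rewrite <- Hfg_opp_l in HL.
  destruct (peaked_ratio a b _ g _ g' _ (deriv_opp_on _ _ _ _ Hf) Hg (lim_left_opp _ _ Hfl) Hgl HL)
    as [Hdecr Hpeak].
  { exists c. rewrite Ropp_div_fun. apply peak_at_opp, Hc. }
  rewrite Ropp_div_fun in Hdecr, Hpeak. rewrite <- ER_neg_0 in Hdecr, Hpeak. split.
  - intros Hsign. apply strict_decr_on_opp, Hdecr.
    destruct Hsign as [[? ?] | [? ?]]; [left | right]; split; auto; apply ER_le_neg; auto.
  - intros Hsign. apply (ex_unique_iff _ _ (peak_at_opp a b _)), Hpeak.
    destruct Hsign as [[? ?] | [? ?]]; [left | right]; split; auto; apply ER_lt_neg; auto.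
Qed.

Theorem mainTheorem4 (a b : ER) (f g f' g' : R -> R) :
  ER_lt a b ->
  (forall x, in_ivl a b x -> derivable_pt_lim f x (f' x)) ->
  (forall x, in_ivl a b x -> derivable_pt_lim g x (g' x)) ->
  (forall x, in_ivl a b x -> g' x <> 0) ->
  lim_left f b 0 -> lim_left g b 0 ->
  forall L : ER, lim_right_ext (Hfg f g f' g') a L ->
  ((exists c, in_ivl a b c /\
      strict_incr_on a (Fin c) (fun x => f' x / g' x) /\
      strict_decr_on (Fin c) b (fun x => f' x / g' x)) ->
    (((forall x, in_ivl a b x -> 0 < g' x) /\ ER_le L (Fin 0) \/
      (forall x, in_ivl a b x -> g' x < 0) /\ ER_le (Fin 0) L) ->
      strict_decr_on a b (fun x => f x / g x)) /\
    (((forall x, in_ivl a b x -> 0 < g' x) /\ ER_lt (Fin 0) L \/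
      (forall x, in_ivl a b x -> g' x < 0) /\ ER_lt L (Fin 0)) ->
      exists! xb, in_ivl a b xb /\
        strict_incr_on a (Fin xb) (fun x => f x / g x) /\
        strict_decr_on (Fin xb) b (fun x => f x / g x))) /\
  ((exists c, in_ivl a b c /\
      strict_decr_on a (Fin c) (fun x => f' x / g' x) /\
      strict_incr_on (Fin c) b (fun x => f' x / g' x)) ->
    (((forall x, in_ivl a b x -> 0 < g' x) /\ ER_le (Fin 0) L \/
      (forall x, in_ivl a b x -> g' x < 0) /\ ER_le L (Fin 0)) ->
      strict_incr_on a b (fun x => f x / g x)) /\
    (((forall x, in_ivl a b x -> 0 < g' x) /\ ER_lt L (Fin 0) \/
      (forall x, in_ivl a b x -> g' x < 0) /\ ER_lt (Fin 0) L) ->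
      exists! xb, in_ivl a b xb /\
        strict_decr_on a (Fin xb) (fun x => f x / g x) /\
        strict_incr_on (Fin xb) b (fun x => f x / g x))).
Proof.
  (* [ER_lt a b] and [g' <> 0] are implied by the hypotheses of each case. *)
  intros _ Hf Hg _ Hfl Hgl L HL. split.
  - exact (peaked_ratio a b f g f' g' L Hf Hg Hfl Hgl HL).
  - exact (troughed_ratio a b f g f' g' L Hf Hg Hfl Hgl HL).
Qed.
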